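(* Every uncrossable family of cycles in a graph is strongly uncrossable.
   Context: Graphs may be directed or undirected; cycles are simple. For paths/cycles, $P+Q$ denotes the union (multiset sum) of edge sets and $C-P$ the edge set of $C$ minus that of $P$. A family $\mathcal{C}$ of cycles is uncrossable if for all $C_1,C_2\in\mathcal{C}$ and every path $P_2$ in $C_2$ sharing only its two endpoints with $C_1$, there is a path $P_1$ in $C_1$ between these endpoints with $P_1+P_2\in\mathcal{C}$ and such that $(C_1-P_1)+(C_2-P_2)$ contains a cycle of $\mathcal{C}$. The family $\mathcal{C}$ is strongly uncrossable if for all $C_1,C_2\in\mathcal{C}$ and any two vertices $v,w$ lying on both $C_1$ and $C_2$, there are a $v$-$w$-path $P_1$ in $C_1$ and a $v$-$w$-path $P_2$ in $C_2$ (subpaths of the cycles with endpoints $v,w$) such that both $P_1+P_2$ and $(C_1-P_1)+(C_2-P_2)$ contain (the edge set of) a cycle in $\mathcal{C}$. *)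

From mathcomp Require Import all_boot.
Set Implicit Arguments. Unset Strict Implicit. Unset Printing Implicit Defensive.

(* If [dir] is true the graph is
   directed (e goes from src e to tgt e), otherwise it is undirected and the
   orientation given by src/tgt is irrelevant. Paths and cycles are simple and
   are identified with their edge sets. *)
Section Graphs.
Variables (V E : finType) (dir : bool) (src tgt : E -> V).

Definition joins (e : E) (x y : V) : bool :=
  ((src e == x) && (tgt e == y)) || (~~ dir && (src e == y) && (tgt e == x)).

(* walk starting at x, traversing edges es, visiting vertices vs (after x) *)
Definition is_walk (x : V) (es : seq E) (vs : seq V) : bool :=
  (size vs == size es) &&
  all (fun t => joins t.1 t.2.1 t.2.2) (zip es (zip (x :: vs) vs)).

Definition path_from (P : {set E}) (x y : V) : Prop :=
  exists (es : seq E) (vs : seq V),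
    [/\ is_walk x es vs, uniq (x :: vs), uniq es, last x vs = y
      & P = [set e in es]].

Definition path_between (P : {set E}) (x y : V) : Prop :=
  path_from P x y \/ path_from P y x.

Definition is_cycle (C : {set E}) : Prop :=
  exists (x : V) (es : seq E) (vs : seq V),
    [/\ is_walk x es vs, 0 < size es, uniq vs && uniq es, last x vs = x
      & C = [set e in es]].

Definition vset (F : {set E}) : {set V} :=
  [set v | [exists e in F, (src e == v) || (tgt e == v)]].

Definition cycle_family (Fam : {set {set E}}) : Prop :=
  forall C, C \in Fam -> is_cycle C.

(* P1 + P2 (multiset sum) is a cycle of Fam: disjoint with union in Fam.
   A multiset contains (the edge set of) a cycle D iff D is included in its
   support, here the union. *)
Definition uncrossable (Fam : {set {set E}}) : Prop :=
  forall C1 C2, C1 \in Fam -> C2 \in Fam ->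
  forall (a b : V) (P2 : {set E}),
    a != b -> P2 \subset C2 -> path_between P2 a b ->
    vset P2 :&: vset C1 = [set a; b] ->
    exists P1 : {set E},
      [/\ P1 \subset C1, path_between P1 a b,
          [disjoint P1 & P2], (P1 :|: P2) \in Fam
        & exists2 D, D \in Fam & D \subset (C1 :\: P1) :|: (C2 :\: P2)].

Definition strongly_uncrossable (Fam : {set {set E}}) : Prop :=
  forall C1 C2, C1 \in Fam -> C2 \in Fam ->
  forall v w : V, v != w ->
    v \in vset C1 -> w \in vset C1 -> v \in vset C2 -> w \in vset C2 ->
    exists P1 P2 : {set E},
      [/\ P1 \subset C1 /\ path_between P1 v w,
          P2 \subset C2 /\ path_between P2 v w,
          (exists2 D, D \in Fam & D \subset P1 :|: P2)
        & exists2 D, D \in Fam & D \subset (C1 :\: P1) :|: (C2 :\: P2)].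

End Graphs.

(* Let v != w lie on two cycles C1, C2 of the family.  The key fact is a
   completion property: every v-w path X1 inside C1 can be joined with one of
   the two v-w arcs of C2 so that the union contains a member of the family.
   It is proved by induction on |C2 :|: X1| + |X1|.  If the edge of X1 at v
   lies on C2, drop it and extend the arc obtained for the shorter path.
   Otherwise let S be the initial segment of X1 up to its first return b to
   C2; uncrossability gives a v-b path P of C2 with P :|: S in the family.  If
   w is not on P, the v-w arc of C2 through P works; otherwise the problem
   moves to the cycle P :|: S, which spans fewer edges together with X1, and
   the arc found there transfers back to C2.
   So every arc of C1 has a partner arc of C2 and vice versa; a 2x2 bipartite
   graph without isolated vertices has a perfect matching, and a perfect
   matching is exactly a pair of complementary choices as required. *)

From Pilot Require Import Defs.
From mathcomp Require Import all_boot zify.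
Set Implicit Arguments. Unset Strict Implicit. Unset Printing Implicit Defensive.

Section Cycles.
Variables (V E : finType) (dir : bool) (src tgt : E -> V).
Local Notation joins := (joins dir src tgt).
Local Notation is_walk := (is_walk dir src tgt).
Local Notation path_from := (path_from dir src tgt).
Local Notation path_between := (path_between dir src tgt).
Local Notation is_cycle := (is_cycle dir src tgt).
Local Notation vset := (vset src tgt).

(** * Walks and paths *)

Definition incident (e : E) (z : V) := (src e == z) || (tgt e == z).

Lemma joinsE e x y :
  joins e x y -> (src e = x /\ tgt e = y) \/ (src e = y /\ tgt e = x).
Proof.
by case/orP=> [/andP[/eqP-> /eqP->]|/andP[/andP[_ /eqP->] /eqP->]]; [left|right].
Qed.

Lemma joins_incident e x y z : joins e x y -> incident e z = (z == x) || (z == y).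
Proof.
by rewrite /incident => /joinsE[[-> ->]|[-> ->]]; rewrite ?(eq_sym x) ?(eq_sym y) // orbC.
Qed.

Lemma joins_incident_r e x y : joins e x y -> incident e y.
Proof. by move/joins_incident->; rewrite eqxx orbT. Qed.

Lemma joins_unique_r e x y y' : joins e x y -> joins e x y' -> y = y'.
Proof. by move=> /joinsE[[? ?]|[? ?]] /joinsE[[? ?]|[? ?]]; congruence. Qed.

Lemma joins_unique_l e x x' y : joins e x y -> joins e x' y -> x = x'.
Proof. by move=> /joinsE[[? ?]|[? ?]] /joinsE[[? ?]|[? ?]]; congruence. Qed.

Lemma joins_flip e v u u' : joins e v u -> joins e u u' -> v != u -> u' = v.
Proof. by move=> /joinsE[[? ?]|[? ?]] /joinsE[[? ?]|[? ?]] /eqP; congruence. Qed.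

Lemma joins_sym e x y : ~~ dir -> joins e x y -> joins e y x.
Proof.
rewrite /Defs.joins => nd /orP[/andP[a b]|/andP[/andP[_ a] b]]; apply/orP;
  by [right; rewrite nd a b | left; rewrite a b].
Qed.

Lemma joins_dirP e x y : dir -> joins e x y -> src e = x /\ tgt e = y.
Proof. by rewrite /Defs.joins => -> /orP[/andP[/eqP-> /eqP->]|]. Qed.

Lemma walk_nil x vs : is_walk x [::] vs = (vs == [::]).
Proof. by case: vs. Qed.

Lemma walk_cons x e es u vs :
  is_walk x (e :: es) (u :: vs) = joins e x u && is_walk u es vs.
Proof. by rewrite /Defs.is_walk /= eqSS andbCA. Qed.

Lemma walk_size x es vs : is_walk x es vs -> size vs = size es.
Proof. by case/andP=> /eqP. Qed.

Lemma walk_cat x es1 es2 vs1 vs2 : size vs1 = size es1 ->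
  is_walk x (es1 ++ es2) (vs1 ++ vs2) =
  is_walk x es1 vs1 && is_walk (last x vs1) es2 vs2.
Proof.
elim: es1 x vs1 => [|e es1 IH] x [|u vs1] //= [Hs].
by rewrite !walk_cons IH // andbA.
Qed.

Lemma walk_rcons x es e vs u : size vs = size es ->
  is_walk x (rcons es e) (rcons vs u) = is_walk x es vs && joins e (last x vs) u.
Proof. by move=> Hs; rewrite -!cats1 walk_cat // walk_cons walk_nil andbT. Qed.

Lemma walk_rconsP x es e vs : is_walk x (rcons es e) vs ->
  exists vs' u, [/\ vs = rcons vs' u, is_walk x es vs' & joins e (last x vs') u].
Proof.
move=> W; have := walk_size W; rewrite size_rcons.
case/lastP: vs W => [//|vs' u] W; rewrite size_rcons => -[Hs].
by move: W; rewrite walk_rcons // => /andP[W J]; exists vs', u.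
Qed.

Lemma walk_split x es vs z : is_walk x es vs -> z \in x :: vs ->
  exists es1 es2 vs1 vs2, [/\ es = es1 ++ es2, vs = vs1 ++ vs2,
    is_walk x es1 vs1, is_walk z es2 vs2 & last x vs1 = z].
Proof.
elim: es x vs => [|e es IH] x [|u vs] //.
- by rewrite inE => _ /eqP->; exists [::], [::], [::], [::].
rewrite walk_cons => /andP[J W]; rewrite inE => /orP[/eqP->|Hz].
  by exists [::], (e :: es), [::], (u :: vs); rewrite walk_nil walk_cons J W.
have [es1 [es2 [vs1 [vs2 [-> -> W1 W2 L]]]]] := IH _ _ W Hz.
by exists (e :: es1), es2, (u :: vs1), vs2; rewrite walk_cons J W1.
Qed.

Lemma walk_first_hit (p : pred V) x es vs : is_walk x es vs -> has p vs ->
  exists es1 es2 mid b vs2, [/\ es = es1 ++ es2, vs = rcons mid b ++ vs2,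
    is_walk x es1 (rcons mid b), p b & ~~ has p mid].
Proof.
elim: es x vs => [|e es IH] x [|u vs] //; rewrite walk_cons => /andP[J W] /=.
case Hu: (p u) => /= Hh.
  by exists [:: e], es, [::], u, vs; rewrite /= walk_cons J.
have [es1 [es2 [mid [b [vs2 [-> -> W1 Hb Hm]]]]]] := IH _ _ W Hh.
by exists (e :: es1), es2, (u :: mid), b, vs2; rewrite /= walk_cons J W1 Hu.
Qed.

Lemma last_rev_belast (x : V) s : last (last x s) (rev (belast x s)) = x.
Proof.
have := congr1 (last (last x s)) (esym (rev_rcons (belast x s) (last x s))).
by rewrite -lastI rev_cons last_rcons /= => ->.
Qed.

Lemma walk_rev x es vs : ~~ dir -> is_walk x es vs ->
  is_walk (last x vs) (rev es) (rev (belast x vs)).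
Proof.
move=> nd; elim: es x vs => [|e es IH] x [|u vs] //.
rewrite walk_cons => /andP[J W] /=; rewrite !rev_cons walk_rcons; last first.
  by rewrite size_rev size_belast size_rev (walk_size W).
by rewrite (IH _ _ W) last_rev_belast joins_sym.
Qed.

Lemma vset_seq es z : (z \in vset [set e in es]) = has (incident^~ z) es.
Proof.
rewrite inE; apply/existsP/hasP => [[e /andP[]]|[e He Hi]].
  by rewrite inE => He Hi; exists e.
by exists e; rewrite inE He.
Qed.

Lemma vset_walk x es vs z : is_walk x es vs -> es != [::] ->
  (z \in vset [set e in es]) = (z \in x :: vs).
Proof.
rewrite vset_seq; elim: es x vs => [|e es IH] x [|u vs] //.
rewrite walk_cons => /andP[J W] _ /=; rewrite (joins_incident z J).
case: es IH W => [|e' es] IH W.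
  by move: W; rewrite walk_nil => /eqP-> /=; rewrite !inE orbF.
by rewrite (IH u vs W) // !inE; case: (z == x); case: (z == u).
Qed.

Lemma walk_not_incident y es vs z :
  is_walk y es vs -> z \notin y :: vs -> ~~ has (incident^~ z) es.
Proof.
elim: es y vs => [|e es IH] y [|u vs] //; rewrite walk_cons => /andP[J W].
rewrite !inE negb_or => /andP[H1 H2] /=.
by rewrite (joins_incident z J) negb_or !negb_or H1 /= (IH _ _ W) // andbT; case/norP: H2.
Qed.

Lemma walk_incident_head x e0 es vs e : is_walk x (e0 :: es) vs ->
  uniq (x :: vs) -> e \in e0 :: es -> incident e x -> e = e0.
Proof.
case: vs => [//|u vs]; rewrite walk_cons => /andP[J W] /andP[Hx _].
rewrite inE => /orP[/eqP//|He] Hi.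
by have /hasP := walk_not_incident W Hx; case; exists e.
Qed.

Lemma walk_incident_last x es el vs e : is_walk x (rcons es el) vs ->
  uniq (x :: vs) -> e \in rcons es el -> incident e (last x vs) -> e = el.
Proof.
move=> /walk_rconsP[vs' [u [-> W J]]]; rewrite last_rcons -rcons_cons rcons_uniq.
case/andP=> Hu _; rewrite mem_rcons inE => /orP[/eqP//|He] Hi.
by have /hasP := walk_not_incident W Hu; case; exists e.
Qed.

Lemma vsetP (F : {set E}) z : reflect (exists2 e, e \in F & incident e z) (z \in vset F).
Proof.
by rewrite inE; apply: (iffP existsP) => [[e /andP[]]|[e He Hi]]; exists e; rewrite ?He.
Qed.

Lemma vsetS (F G : {set E}) : F \subset G -> vset F \subset vset G.
Proof.
move=> /subsetP FG; apply/subsetP => z /vsetP[e He Hi].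
by apply/vsetP; exists e; rewrite ?FG.
Qed.

Lemma vsetU (F G : {set E}) : vset (F :|: G) = vset F :|: vset G.
Proof.
apply/setP => z; rewrite in_setU; apply/vsetP/orP.
  by case=> e; rewrite inE => /orP[] He Hi; [left|right]; apply/vsetP; exists e.
by case=> /vsetP[e He Hi]; exists e; rewrite // inE He ?orbT.
Qed.

Lemma last_mem (x : V) s : s != [::] -> last x s \in s.
Proof. by case: s => //= a s _; apply: mem_last. Qed.

Lemma path_from_edge e x y : joins e x y -> x != y -> path_from [set e] x y.
Proof.
move=> J xy; exists [:: e], [:: y]; rewrite /= inE xy walk_cons J walk_nil.
by split=> //; apply/setP => f; rewrite !inE.
Qed.

Lemma path_from_ends P x y : path_from P x y -> x != y -> x \in vset P /\ y \in vset P.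
Proof.
case=> es [vs [W U Ues L ->]] xy.
have Hne : es != [::].
  by apply: contra_neq xy => Hes; move: W L; rewrite Hes walk_nil => /eqP-> <-.
by rewrite !(vset_walk _ W Hne) -L mem_last mem_head.
Qed.

Lemma path_between_sym P x y : path_between P x y -> path_between P y x.
Proof. by case; [right|left]. Qed.

Lemma path_between_ends P x y :
  path_between P x y -> x != y -> x \in vset P /\ y \in vset P.
Proof.
case=> H xy; first exact: path_from_ends H xy.
by have [] := path_from_ends H; rewrite 1?eq_sym.
Qed.

Lemma path_from_split P x y z : path_from P x y -> z \in vset P ->
  exists P1 P2, [/\ path_from P1 x z, path_from P2 z y & P = P1 :|: P2].
Proof.
case=> es [vs [W U Ues L ->]] Hz.
have Hne : es != [::] by apply: contraTneq Hz => ->; rewrite vset_seq.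
move: Hz; rewrite (vset_walk _ W Hne) => Hz.
have [es1 [es2 [vs1 [vs2 [Ees Evs W1 W2 L1]]]]] := walk_split W Hz.
move: U Ues; rewrite Evs Ees -cat_cons !cat_uniq => /and3P[U1 Hd U2] /andP[Ue1 /andP[_ Ue2]].
exists [set e in es1], [set e in es2]; split.
- by exists es1, vs1.
- exists es2, vs2; split => //; last by rewrite -L Evs last_cat L1.
  rewrite /= U2 andbT; apply: contraNN Hd => Hzv.
  by apply/hasP; exists z; rewrite // -L1 mem_last.
- by apply/setP => e; rewrite !inE mem_cat.
Qed.

Lemma path_between_subpath P a b z : path_between P a b -> z \in vset P ->
  exists2 Q : {set E}, Q \subset P & path_between Q a z.
Proof.
case=> H Hz; have [P1 [P2 [H1 H2 ->]]] := path_from_split H Hz.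
  by exists P1; [rewrite subsetUl | left].
by exists P2; [rewrite subsetUr | right].
Qed.

Lemma path_from_behead X v w e : path_from X v w -> e \in X -> incident e v ->
  exists u, [/\ joins e v u, v != u & path_from (X :\ e) u w].
Proof.
case=> -[|f es] [vs [W U Ue L ->]]; rewrite inE // => He Hi.
have Ef := walk_incident_head W U He Hi; subst f.
case: vs W U L => [//|u vs]; rewrite walk_cons => /andP[J W] /andP[vU U] L.
case/andP: Ue => He' Ue; exists u; split => //.
  by apply: contraNneq vU => ->; rewrite mem_head.
exists es, vs; split => //.
by apply/setP => x; rewrite !inE; case: eqP => [->|]; rewrite ?(negbTE He').
Qed.

Lemma path_from_belast X v w e : path_from X w v -> e \in X -> incident e v ->
  exists2 u, joins e u v & path_from (X :\ e) w u.
Proof.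
case=> es [vs [W U Ue L ->]]; rewrite inE => He Hi.
case/lastP: es W Ue He => [//|es el] W Ue He.
have Ee := walk_incident_last W U He (etrans (congr1 _ L) Hi); subst el.
have [vs' [u [Evs W' J]]] := walk_rconsP W.
move: L U Ue; rewrite Evs last_rcons -rcons_cons !rcons_uniq => <- /andP[_ U] /andP[He' Ue].
exists (last w vs') => //; exists es, vs'; split => //.
by apply/setP => x; rewrite !inE mem_rcons inE; case: eqP => [->|]; rewrite ?(negbTE He').
Qed.

Lemma path_between_drop Q u w e v : path_between Q u w -> e \in Q -> joins e v u ->
  v != u -> path_between (Q :\ e) v w.
Proof.
move=> [] HQ He J vu.
  have [u' [J' _ HQ']] := path_from_behead HQ He (joins_incident_r J).
  by left; rewrite -(joins_flip J J' vu).
have [u' J' HQ'] := path_from_belast HQ He (joins_incident_r J).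
by right; rewrite (joins_unique_l J J').
Qed.

Lemma path_from_first_hit (A : {set V}) X v w :
  path_from X v w -> v != w -> v \in A -> w \in A ->
  exists b (S : {set E}),
    [/\ v != b, S \subset X, path_from S v b & vset S :&: A = [set v; b]].
Proof.
case=> es [vs [W U Ue L ->]] vw Hv Hw.
have Hvs : vs != [::] by apply: contra_neq vw => Hvs; rewrite -L Hvs.
have [|es1 [es2 [mid [b [vs2 [Ees Evs W1 Hb Hmid]]]]]] :=
  walk_first_hit (p := fun z => z \in A) W; first by apply/hasP; exists w; rewrite // -L last_mem.
move: U Ue; rewrite Evs Ees -cat_cons !cat_uniq => /andP[U1 _] /andP[Ue1 _].
have Hes1 : es1 != [::] by apply: contraPneq (walk_size W1) => ->; rewrite size_rcons.
exists b, [set e in es1]; split.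
- by apply: contraTneq U1 => <-; rewrite /= mem_rcons mem_head.
- by apply/subsetP => x; rewrite !inE mem_cat => ->.
- by exists es1, (rcons mid b); rewrite last_rcons.
apply/setP => z; rewrite in_setI (vset_walk _ W1 Hes1) in_set2 inE mem_rcons inE.
have [->|_] := eqP; first by rewrite Hv.
have [->|_] := eqP; first by rewrite Hb.
by apply: negbTE; apply: contraNN Hmid => /andP[Hz HzA]; apply/hasP; exists z.
Qed.

Lemma path_from_rev X x y : ~~ dir -> path_from X x y -> path_from X y x.
Proof.
move=> nd [es [vs [W U Ue L ->]]]; exists (rev es), (rev (belast x vs)).
rewrite -L walk_rev // rev_uniq Ue -rev_rcons -lastI rev_uniq U last_rev_belast.
by split=> //; apply/setP => e; rewrite !inE mem_rev.
Qed.

Lemma path_from_nil X t : path_from X t t -> X = set0.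
Proof.
case=> es [[|u vs] [W U _ L ->]].
  by move: (walk_size W) => /esym/size0nil->; apply/setP => e; rewrite !inE.
by case/andP: U => /negP[]; rewrite -{1}L last_mem.
Qed.

(** * Cycles *)

Definition cycle_walk x es vs :=
  [&& is_walk x es vs, uniq vs, uniq es, last x vs == x & 0 < size es].

Lemma cycle_walk_rot1 x e es u vs : cycle_walk x (e :: es) (u :: vs) ->
  cycle_walk u (rcons es e) (rcons vs u).
Proof.
rewrite /cycle_walk walk_cons => /and5P[/andP[J W] Uv Ue /eqP L _].
have L' : last u vs = x := L.
rewrite walk_rcons ?(walk_size W) // W L' J !rcons_uniq last_rcons eqxx size_rcons.
by move: Uv Ue => /= -> ->.
Qed.

Lemma cycle_walk_rot n x es vs : cycle_walk x es vs -> n < size vs ->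
  exists es' vs', cycle_walk (nth x vs n) es' vs' /\ [set e in es'] = [set e in es].
Proof.
elim: n x es vs => [|n IH] x [|e es] [|u vs] // Cw Hn.
  exists (rcons es e), (rcons vs u); split; first exact: (cycle_walk_rot1 Cw).
  by apply/setP => f; rewrite !inE mem_rcons.
have [|es' [vs' [Cw' Es]]] := IH _ _ _ (cycle_walk_rot1 Cw).
  by rewrite size_rcons ltnW.
exists es', vs'; split.
  by move: Cw'; rewrite nth_rcons -ltnS Hn (set_nth_default x).
by rewrite Es; apply/setP => f; rewrite !inE mem_rcons.
Qed.

Lemma cycle_walk_at C z : is_cycle C -> z \in vset C ->
  exists es vs, cycle_walk z es vs /\ C = [set e in es].
Proof.
move=> [x [es [vs [W Hs /andP[Uv Ue] L ->]]]].
have Hne : es != [::] by case: (es) Hs.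
rewrite (vset_walk _ W Hne) => Hz.
have Hvs : vs != [::] by apply: contraTneq Hs => Evs; rewrite -(walk_size W) Evs.
have Hz' : z \in vs by case/predU1P: Hz => [->|//]; rewrite -{1}L last_mem.
have Cw : cycle_walk x es vs by rewrite /cycle_walk W Uv Ue L eqxx Hs.
have [es' [vs' [Cw' Es]]] := cycle_walk_rot Cw (etrans (index_mem z vs) Hz').
by exists es', vs'; rewrite nth_index in Cw'.
Qed.

Lemma cycle_degree C z : is_cycle C -> #|[set e in C | incident e z]| <= 2.
Proof.
move=> HC; have [Hz|Hz] := boolP (z \in vset C); last first.
  rewrite (_ : [set _ in C | _] = set0) ?cards0 //; apply/setP => e; rewrite !inE.
  by apply: contraNF Hz => /andP[He Hi]; apply/vsetP; exists e.
have [es [vs [/and5P[W Uv _ /eqP L Hs] ->]]] := cycle_walk_at HC Hz.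
case: es W Hs => [//|e1 es] W _.
apply: (@leq_trans #|[set e1; last e1 es]|); last by rewrite cards2 ltnS leq_b1.
apply/subset_leq_card/subsetP => e; rewrite !inE => /andP[He Hi].
case/lastP: es W He => [|es el] W; first by rewrite orbF => ->.
case: vs W Uv L => [//|u vs]; rewrite walk_cons => /andP[_ W] Uv L.
have [vs' [b [Evs W' _]]] := walk_rconsP W.
move: L; rewrite Evs /= last_rcons => Eb; subst b.
move: Uv; rewrite Evs -rcons_cons rcons_uniq => /andP[Hz' _].
rewrite last_rcons mem_rcons in_cons => /or3P[->|->|He]; rewrite ?orbT //.
by have /hasP[] := walk_not_incident W' Hz'; exists e.
Qed.

Lemma card_le2_eq (T : finType) (A : {set T}) a b c : #|A| <= 2 ->
  a \in A -> b \in A -> c \in A -> b != a -> c != a -> b = c.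
Proof.
move=> HA Ha Hb Hc Hba Hca; rewrite (cardsD1 a) Ha in HA.
by apply: (card_le1_eqP HA); rewrite !inE ?Hba ?Hca.
Qed.

Lemma cycle_paths_eq C (X Y : {set E}) s t f : is_cycle C ->
  X \subset C -> Y \subset C -> path_from X s t -> path_from Y s t ->
  f \in X -> f \in Y -> incident f s -> X = Y.
Proof.
move=> HC; have [n] := ubnP #|X|.
elim: n X Y s f => // n IH X Y s f ltXn SX SY PX PY fX fY fs.
have [u [J _ PX']] := path_from_behead PX fX fs.
have [u' [J' _ PY']] := path_from_behead PY fY fs.
rewrite -(joins_unique_r J J') in PY'.
rewrite -(setD1K fX) -(setD1K fY); congr (_ |: _).
have [ut|ut] := eqVneq u t.
  by rewrite ut in PX' PY'; rewrite (path_from_nil PX') (path_from_nil PY').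
have [/vsetP[g gX gu] _] := path_from_ends PX' ut.
have [/vsetP[h hY hu] _] := path_from_ends PY' ut.
have SX' : X :\ f \subset C := subset_trans (subD1set X f) SX.
have SY' : Y :\ f \subset C := subset_trans (subD1set Y f) SY.
have gh : g = h.
  apply: (card_le2_eq (cycle_degree u HC) (a := f)).
  - by rewrite inE (subsetP SX f fX) (joins_incident_r J).
  - by rewrite inE (subsetP SX' g gX) gu.
  - by rewrite inE (subsetP SY' h hY) hu.
  - by move: gX; rewrite !inE => /andP[].
  - by move: hY; rewrite !inE => /andP[].
subst h; apply: (IH _ _ _ _ _ SX' SY' PX' PY' gX hY gu).
by move: ltXn; rewrite (cardsD1 f) fX.
Qed.

Lemma cycle_path_from_eq C (A B X : {set E}) x y : is_cycle C -> x != y ->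
  path_from A x y -> path_from B y x -> C = A :|: B -> X \subset C -> path_from X x y ->
  X = A \/ X = B.
Proof.
move=> HC xy PA PB EC SX PX; have [/vsetP[f fX fx] _] := path_from_ends PX xy.
have SA : A \subset C by rewrite EC subsetUl.
have SB : B \subset C by rewrite EC subsetUr.
move: (subsetP SX f fX); rewrite EC in_setU => /orP[fA|fB].
  by left; apply: cycle_paths_eq HC SX SA PX PA fX fA fx.
have [nd|d] := boolP (~~ dir).
  by right; apply: cycle_paths_eq HC SX SB PX (path_from_rev nd PB) fX fB fx.
have [u [J xu _]] := path_from_behead PX fX fx.
have [u' J' _] := path_from_belast PB fB fx.
have [_ tx] := joins_dirP (negbNE d) J'.
by have [_ tu] := joins_dirP (negbNE d) J; rewrite -tu tx eqxx in xu.
Qed.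

Lemma cycle_arcs C x y : is_cycle C -> x != y -> x \in vset C -> y \in vset C ->
  exists A B : {set E}, [/\ C :\: A = B, C :\: B = A, path_from A x y, path_from B y x &
    forall X : {set E}, X \subset C -> path_between X x y -> X = A \/ X = B].
Proof.
move=> HC xy Hx Hy.
have [es [vs [/and5P[W Uv Ue /eqP L Hs] EC]]] := cycle_walk_at HC Hx.
have Hne : es != [::] by case: (es) Hs.
have Hy' : y \in x :: vs by rewrite -(vset_walk _ W Hne) -EC.
have [es1 [es2 [vs1 [vs2 [Ees Evs W1 W2 L1]]]]] := walk_split W Hy'.
have L2 : last y vs2 = x by rewrite -L1 -last_cat -Evs.
have y1 : y \in vs1 by rewrite -L1 last_mem //; apply: contraNneq xy => E1; rewrite -L1 E1.
have x2 : x \in vs2 by rewrite -{1}L2 last_mem //; apply: contraNneq xy => E2; rewrite -L2 E2.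
move: Uv Ue; rewrite Evs Ees !cat_uniq => /and3P[U1 Hd U2] /and3P[Ue1 Hde Ue2].
have PA : path_from [set e in es1] x y.
  exists es1, vs1; split => //=; rewrite U1 andbT.
  by apply: contraNN Hd => x1; apply/hasP; exists x.
have PB : path_from [set e in es2] y x.
  exists es2, vs2; split => //=; rewrite U2 andbT.
  by apply: contraNN Hd => y2; apply/hasP; exists y.
have EU : [set e in es1] :|: [set e in es2] = C.
  by rewrite EC Ees; apply/setP => e; rewrite !inE mem_cat.
have dAB : [disjoint [set e in es1] & [set e in es2]].
  rewrite -setI_eq0; apply/eqP/setP => e; rewrite !inE; apply/negbTE.
  by apply: contraNN Hde => /andP[e1 e2]; apply/hasP; exists e.
exists [set e in es1], [set e in es2]; split => //.
- by rewrite -EU setDUl setDv set0U; apply/setDidPl; rewrite disjoint_sym.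
- by rewrite -EU setDUl setDv setU0; apply/setDidPl.
move=> X SX [] PX; first exact: cycle_path_from_eq HC xy PA PB (esym EU) SX PX.
have yx : y != x by rewrite eq_sym.
by case: (cycle_path_from_eq HC yx PB PA _ SX PX); [rewrite setUC EU|right|left].
Qed.

Lemma cycle_compl_path C (X : {set E}) x y : is_cycle C -> X \subset C ->
  path_between X x y -> x != y -> path_between (C :\: X) x y.
Proof.
move=> HC SX PX xy; have SXC := subsetP (vsetS SX).
have [xX yX] := path_between_ends PX xy.
have [A [B [EB EA PA PB arcs]]] := cycle_arcs HC xy (SXC _ xX) (SXC _ yX).
by case: (arcs X SX PX) => ->; [rewrite EB; right | rewrite EA; left].
Qed.

Lemma cycle_path_cases C (X Y : {set E}) x y : is_cycle C -> X \subset C -> Y \subset C ->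
  path_between X x y -> path_between Y x y -> x != y -> X = Y \/ X = C :\: Y.
Proof.
move=> HC SX SY PX PY xy; have SXC := subsetP (vsetS SX).
have [xX yX] := path_between_ends PX xy.
have [A [B [EB EA _ _ arcs]]] := cycle_arcs HC xy (SXC _ xX) (SXC _ yX).
by case: (arcs X SX PX) => ->; case: (arcs Y SY PY) => ->; rewrite ?EA ?EB; auto.
Qed.

Lemma cycle_path_extend C (X' : {set E}) e v u w : is_cycle C -> e \in C ->
  joins e v u -> v != u -> u != w -> v != w -> X' \subset C -> path_between X' u w ->
  exists2 X : {set E}, X \subset C /\ path_between X v w & X' \subset e |: X.
Proof.
move=> HC eC J vu uw vw SX PX.
have [eX|eX] := boolP (e \in X').
  exists (X' :\ e); last by rewrite setD1K.
  by split; [apply: subset_trans (subD1set _ _) SX | apply: path_between_drop PX eX J vu].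
have PQ : path_between ((C :\: X') :\ e) v w.
  by apply: path_between_drop (cycle_compl_path HC SX PX uw) _ J vu; rewrite inE eX.
exists (C :\: ((C :\: X') :\ e)).
  split; first exact: subsetDl.
  by apply: cycle_compl_path HC _ PQ vw; apply: subset_trans (subD1set _ _) (subsetDl _ _).
by apply/subsetP => x xX; rewrite !inE xX (subsetP SX x xX) /= andbF orbT.
Qed.

Lemma cycle_path_choice C (P : {set E}) v b w : is_cycle C -> P \subset C ->
  path_between P v b -> v != b -> w \in vset C -> v != w ->
  (exists2 Pa : {set E}, Pa \subset P & path_between Pa v w) \/
  (exists2 X : {set E}, X \subset C /\ path_between X v w & P \subset X).
Proof.
move=> HC SP PP vb wC vw; have [wP|wP] := boolP (w \in vset P).
  by left; apply: path_between_subpath PP wP.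
right; have PP' := cycle_compl_path HC SP PP vb.
have wP' : w \in vset (C :\: P).
  by move: wC; rewrite -{1}(setID C P) (setIidPr SP) vsetU in_setU (negbTE wP).
have [Q SQ PQ] := path_between_subpath PP' wP'.
exists (C :\: Q).
  by split; [apply: subsetDl | apply: cycle_compl_path HC (subset_trans SQ (subsetDl _ _)) PQ vw].
apply/subsetP => x xP; rewrite inE (subsetP SP x xP) andbT.
by apply/negP => /(subsetP SQ); rewrite inE xP.
Qed.

Lemma cycle_path_transfer C (P S Pa X : {set E}) v w : is_cycle C -> is_cycle (P :|: S) ->
  P \subset C -> Pa \subset P -> path_between Pa v w ->
  X \subset P :|: S -> path_between X v w -> v != w ->
  exists2 X2 : {set E}, X2 \subset C /\ path_between X2 v w & X \subset S :|: X2.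
Proof.
move=> HC HPS SP SPa PPa SX PX vw.
have SPaC : Pa \subset C := subset_trans SPa SP.
case: (cycle_path_cases HPS SX (subset_trans SPa (subsetUl P S)) PX PPa vw) => ->.
  by exists Pa => //; rewrite subsetUr.
exists (C :\: Pa); first by split; [apply: subsetDl | apply: cycle_compl_path HC SPaC PPa vw].
apply/subsetP => x; rewrite !inE => /andP[xPa /orP[xP|->//]].
by rewrite xPa (subsetP SP x xP) orbT.
Qed.

Lemma card_setU_arc_lt C (X P S : {set E}) v b : is_cycle C -> P \subset C ->
  path_between P v b -> v != b -> S \subset X ->
  ~~ [exists e, [&& e \in X, e \in C & incident e v]] ->
  #|(P :|: S) :|: X| < #|C :|: X|.
Proof.
move=> HC SP PP vb SX noedge.
rewrite -setUA (setUidPr SX); apply/proper_card/properP; split; first exact: setSU.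
have [/vsetP[f fCP fv] _] := path_between_ends (cycle_compl_path HC SP PP vb) vb.
move: fCP; rewrite inE => /andP[fP fC]; exists f; first by rewrite inE fC.
rewrite inE (negbTE fP) /=; apply: contraNN noedge => fX.
by apply/existsP; exists f; rewrite fX fC fv.
Qed.

(** * Completing a path by an arc of another cycle *)

Section Completion.
Variable Fam : {set {set E}}.
Hypothesis Fam_cycles : cycle_family dir src tgt Fam.
Hypothesis Fam_uncrossable : uncrossable dir src tgt Fam.

Definition contains_member (F : {set E}) := exists2 D, D \in Fam & D \subset F.

Definition completable (X1 C2 : {set E}) v w :=
  exists2 X2 : {set E}, X2 \subset C2 /\ path_between X2 v w & contains_member (X1 :|: X2).

Lemma contains_memberS (F G : {set E}) : F \subset G -> contains_member F -> contains_member G.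
Proof. by move=> FG [D DF DS]; exists D => //; apply: subset_trans DS FG. Qed.

Lemma completable_edge (C2 X1 : {set E}) e v w : C2 \in Fam -> e \in X1 -> e \in C2 ->
  joins e v w -> v != w -> completable X1 C2 v w.
Proof.
move=> H2 eX eC J vw; exists (C2 :\ e).
  split; first exact: subD1set.
  apply: cycle_compl_path (Fam_cycles H2) _ (or_introl (path_from_edge J vw)) vw.
  by rewrite sub1set.
exists C2 => //; apply/subsetP => x xC; rewrite !inE xC andbT.
by case: eqP => [->|]; rewrite ?eX ?orbT.
Qed.

Lemma completable_behead (C2 X1 : {set E}) e v u w : C2 \in Fam -> e \in X1 -> e \in C2 ->
  joins e v u -> v != u -> u != w -> v != w ->
  completable (X1 :\ e) C2 u w -> completable X1 C2 v w.
Proof.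
move=> H2 eX eC J vu uw vw [X2' [SX2' PX2'] HD].
have [X2 SPX2 SX2e] := cycle_path_extend (Fam_cycles H2) eC J vu uw vw SX2' PX2'.
exists X2 => //; apply: contains_memberS HD; apply/subsetP => x.
rewrite !inE => /orP[/andP[_ ->]//|/(subsetP SX2e)].
by rewrite !inE => /orP[/eqP->|->]; rewrite ?eX ?orbT.
Qed.

Lemma completable_transfer (C2 X1 P S Pa : {set E}) v w : C2 \in Fam -> P :|: S \in Fam ->
  P \subset C2 -> S \subset X1 -> Pa \subset P -> path_between Pa v w -> v != w ->
  completable X1 (P :|: S) v w -> completable X1 C2 v w.
Proof.
move=> H2 H3 SP SX SPa PPa vw [X3 [SX3 PX3] HD].
have [X2 SPX2 SX32] :=
  cycle_path_transfer (Fam_cycles H2) (Fam_cycles H3) SP SPa PPa SX3 PX3 vw.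
exists X2 => //; apply: contains_memberS HD; apply/subsetP => x.
rewrite !inE => /orP[->//|/(subsetP SX32)].
by rewrite inE => /orP[/(subsetP SX)->//|->]; rewrite orbT.
Qed.

Lemma completable_path_from (C1 C2 X1 : {set E}) v w : C1 \in Fam -> C2 \in Fam -> X1 \subset C1 ->
  path_from X1 v w -> v != w -> v \in vset C2 -> w \in vset C2 -> completable X1 C2 v w.
Proof.
(* The first case shortens X1; the second replaces C2 by a cycle that spans
   fewer edges together with X1. *)
move=> H1; have [n] := ubnP (#|C2 :|: X1| + #|X1|).
elim: n C2 X1 v w => // n IH C2 X1 v w measure_lt H2 S1 PX1 vw v2 w2.
have HC2 := Fam_cycles H2.
have [/existsP[e /and3P[eX eC ev]] | noedge] :=
  boolP [exists e, [&& e \in X1, e \in C2 & incident e v]].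
  have [u [J vu PX1']] := path_from_behead PX1 eX ev.
  have [uw|uw] := eqVneq u w; first by rewrite uw in J; apply: completable_edge J vw.
  apply: (completable_behead H2 eX eC J vu uw vw).
  apply: IH H2 (subset_trans (subD1set _ _) S1) PX1' uw _ w2.
    have := subset_leq_card (setUS C2 (subD1set X1 e)).
    by move: measure_lt; rewrite (cardsD1 e X1) eX; lia.
  by apply/vsetP; exists e; rewrite ?(joins_incident_r J).
have [b [S [vb SX PS HS]]] := path_from_first_hit PX1 vw v2 w2.
have [P [SP PP _ H3 _]] :=
  Fam_uncrossable H2 H1 vb (subset_trans SX S1) (or_introl PS) HS.
case: (cycle_path_choice HC2 SP PP vb w2 vw) => [[Pa SPa PPa]|[X2 SPX2 SPX]].
  apply: (completable_transfer H2 H3 SP SX SPa PPa vw).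
  have [vS _] := path_from_ends PS vb.
  have [_ wPa] := path_between_ends PPa vw.
  have v3 : v \in vset (P :|: S) by rewrite vsetU in_setU vS orbT.
  have w3 : w \in vset (P :|: S) by rewrite vsetU in_setU (subsetP (vsetS SPa) _ wPa).
  apply: (IH _ _ _ _ _ H3 S1 PX1 vw v3 w3); rewrite -ltnS (leq_trans _ measure_lt) //.
  by rewrite ltnS ltn_add2r (card_setU_arc_lt HC2 SP PP vb SX noedge).
exists X2 => //; exists (P :|: S) => //.
by rewrite [X1 :|: _]setUC setUSS.
Qed.

Lemma completable_path_between (C1 C2 X1 : {set E}) v w : C1 \in Fam -> C2 \in Fam ->
  X1 \subset C1 -> path_between X1 v w -> v != w -> v \in vset C2 -> w \in vset C2 ->
  completable X1 C2 v w.
Proof.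
move=> H1 H2 S1 [PX vw|PX vw] v2 w2; first exact: completable_path_from H1 H2 S1 PX vw v2 w2.
have [|X2 [SX2 PX2] HD] := completable_path_from H1 H2 S1 PX _ w2 v2.
  by rewrite eq_sym.
by exists X2 => //; split=> //; apply: path_between_sym.
Qed.

Lemma cycle_arc_partner (C1 C2 A B X1 : {set E}) v w : C1 \in Fam -> C2 \in Fam ->
  X1 \subset C1 -> path_between X1 v w -> v != w -> v \in vset C2 -> w \in vset C2 ->
  (forall X : {set E}, X \subset C2 -> path_between X v w -> X = A \/ X = B) ->
  contains_member (X1 :|: A) \/ contains_member (X1 :|: B).
Proof.
move=> H1 H2 S1 P1 vw v2 w2 arcs.
have [X2 [SX2 PX2] HD] := completable_path_between H1 H2 S1 P1 vw v2 w2.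
by case: (arcs X2 SX2 PX2) => <-; [left|right].
Qed.

End Completion.
End Cycles.

Theorem theorem4p4 (V E : finType) (dir : bool) (src tgt : E -> V)
    (Fam : {set {set E}}) :
  cycle_family dir src tgt Fam ->
  uncrossable dir src tgt Fam ->
  strongly_uncrossable dir src tgt Fam.
Proof.
move=> HF HU C1 C2 H1 H2 v w vw v1 w1 v2 w2.
have [A1 [B1 [EB1 EA1 PA1 PB1 arcs1]]] := cycle_arcs (HF _ H1) vw v1 w1.
have [A2 [B2 [EB2 EA2 PA2 PB2 arcs2]]] := cycle_arcs (HF _ H2) vw v2 w2.
have SA1 : A1 \subset C1 by rewrite -EA1 subsetDl.
have SB1 : B1 \subset C1 by rewrite -EB1 subsetDl.
have SA2 : A2 \subset C2 by rewrite -EA2 subsetDl.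
have SB2 : B2 \subset C2 by rewrite -EB2 subsetDl.
have partner2 (X1 : {set E}) : X1 \subset C1 -> path_between dir src tgt X1 v w ->
    contains_member Fam (X1 :|: A2) \/ contains_member Fam (X1 :|: B2).
  by move=> S1 P1; exact: (cycle_arc_partner HF HU H1 H2 S1 P1 vw v2 w2 arcs2).
have partner1 (X2 : {set E}) : X2 \subset C2 -> path_between dir src tgt X2 v w ->
    contains_member Fam (A1 :|: X2) \/ contains_member Fam (B1 :|: X2).
  move=> S2 P2; rewrite [A1 :|: _]setUC [B1 :|: _]setUC.
  exact: (cycle_arc_partner HF HU H2 H1 S2 P2 vw v1 w1 arcs1).
have [[AA BB]|[AB BA]] :
    contains_member Fam (A1 :|: A2) /\ contains_member Fam (B1 :|: B2) \/
    contains_member Fam (A1 :|: B2) /\ contains_member Fam (B1 :|: A2).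
  move: (partner2 _ SA1 (or_introl PA1)) (partner2 _ SB1 (or_intror PB1)).
  by move: (partner1 _ SA2 (or_introl PA2)) (partner1 _ SB2 (or_intror PB2)); tauto.
- by exists A1, A2; split; [split; [|left] | split; [|left] | | rewrite EB1 EB2].
- by exists A1, B2; split; [split; [|left] | split; [|right] | | rewrite EB1 EA2].
Qed.
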